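(* Let $x\in\mathbb R^N$ with block structure $\mathcal B=(\mathcal B_1,\dots,\mathcal B_B)$, weights $\omega_b\ge1$, $0<p\le 2$, and a block norm $\|\cdot\|_q$. For every $s\ge\|\omega\|_\infty^2$, $$\widetilde\sigma_{3s}(x)_{q,p}^{(\omega)}\le\sigma_s(x)_{q,p}^{(\omega)}.$$
   Context: Block structure: $\mathcal B=(\mathcal B_1,\dots,\mathcal B_B)$ is a partition of $\{1,\dots,N\}$; for $x\in\mathbb R^N$, $x[b]=x[\mathcal B_b]$; for $S\subseteq\{1,\dots,B\}$, $x[S]$ equals $x$ on blocks in $S$ and $0$ elsewhere. Weights $\omega_b\ge1$, $\|\omega\|_\infty=\max_b\omega_b$, $\omega(S)=\sum_{b\in S}\omega_b^2$. $\|x\|_{q,p}^{(\omega)}=\big(\sum_b\omega_b^{2-p}\|x[b]\|_q^p\big)^{1/p}$. $\|x\|_0^{(\omega)}=\omega(\{b:x[b]\ne0\})$. $\sigma_s(x)_{q,p}^{(\omega)}=\inf\{\|x-z\|_{q,p}^{(\omega)}:\|z\|_0^{(\omega)}\le s\}$. Quasi-best approximation: let $\pi$ be a permutation of $\{1,\dots,B\}$ with $\|x[\pi(i)]\|_q/\omega_{\pi(i)}$ nonincreasing in $i$; for $t\ge\|\omega\|_\infty^2$ let $k_t=\max\{k:\sum_{i=1}^k\omega_{\pi(i)}^2\le t\}$, $S_t=\{\pi(1),\dots,\pi(k_t)\}$ and $\widetilde\sigma_t(x)_{q,p}^{(\omega)}=\|x-x[S_t]\|_{q,p}^{(\omega)}$.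 *)

From Stdlib Require Import Reals Lra Lia Arith Bool List ClassicalEpsilon.
Open Scope R_scope.

(* Vectors in R^N are functions nat -> R; only indices i < N matter.
   The block structure is given by blk : nat -> nat, blk i = b meaning
   index i lies in block B_b (b < B); blocks are nonempty. *)

Definition is_block_partition (N B : nat) (blk : nat -> nat) : Prop :=
  (forall i, (i < N)%nat -> (blk i < B)%nat) /\
  (forall b, (b < B)%nat -> exists i, (i < N)%nat /\ blk i = b).

Fixpoint sumR (n : nat) (f : nat -> R) : R :=
  match n with
  | O => 0
  | S m => sumR m f + f m
  end.

Fixpoint maxR (n : nat) (f : nat -> R) : R :=
  match n with
  | O => 0
  | S m => Rmax (maxR m f) (f m)
  end.

(* real power with the convention 0^y = 0 (used only for y > 0, x >= 0) *)
Definition rpow (x y : R) : R :=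
  if Rle_dec x 0 then 0 else Rpower x y.

(* a family of norms, one on each block: nrm b u = ||u[b]||_q *)
Definition is_block_norm (N B : nat) (blk : nat -> nat)
  (nrm : nat -> (nat -> R) -> R) : Prop :=
  forall b, (b < B)%nat ->
    (forall u v, (forall i, (i < N)%nat -> blk i = b -> u i = v i) ->
        nrm b u = nrm b v) /\
    (forall u, 0 <= nrm b u) /\
    (forall u, nrm b u = 0 <-> (forall i, (i < N)%nat -> blk i = b -> u i = 0)) /\
    (forall c u, nrm b (fun i => c * u i) = Rabs c * nrm b u) /\
    (forall u v, nrm b (fun i => u i + v i) <= nrm b u + nrm b v).

Definition restrict (blk : nat -> nat) (S : nat -> bool) (x : nat -> R) : nat -> R :=
  fun i => if S (blk i) then x i else 0.

Definition vsub (x z : nat -> R) : nat -> R := fun i => x i - z i.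

Definition mixnorm (B : nat) (nrm : nat -> (nat -> R) -> R) (omega : nat -> R)
  (p : R) (x : nat -> R) : R :=
  rpow (sumR B (fun b => rpow (omega b) (2 - p) * rpow (nrm b x) p)) (1 / p).

Definition block_nz (N : nat) (blk : nat -> nat) (x : nat -> R) (b : nat) : bool :=
  existsb (fun i => Nat.eqb (blk i) b && (if Req_EM_T (x i) 0 then false else true))
          (seq 0 N).

Definition omega_set (B : nat) (omega : nat -> R) (S : nat -> bool) : R :=
  sumR B (fun b => if S b then omega b ^ 2 else 0).

Definition wl0 (N B : nat) (blk : nat -> nat) (omega : nat -> R) (x : nat -> R) : R :=
  omega_set B omega (block_nz N blk x).

Definition omega_inf (B : nat) (omega : nat -> R) : R := maxR B omega.

Definition is_inf (E : R -> Prop) (m : R) : Prop :=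
  (forall y, E y -> m <= y) /\
  (forall m', (forall y, E y -> m' <= y) -> m' <= m).

Definition sigma_best (N B : nat) (blk : nat -> nat) (nrm : nat -> (nat -> R) -> R)
  (omega : nat -> R) (p s : R) (x : nat -> R) : R :=
  epsilon (inhabits 0)
    (is_inf (fun y => exists z : nat -> R,
                 wl0 N B blk omega z <= s /\
                 y = mixnorm B nrm omega p (vsub x z))).

Definition is_perm (B : nat) (pi : nat -> nat) : Prop :=
  (forall i, (i < B)%nat -> (pi i < B)%nat) /\
  (forall i j, (i < B)%nat -> (j < B)%nat -> pi i = pi j -> i = j).

Definition ratio_sorted (B : nat) (nrm : nat -> (nat -> R) -> R)
  (omega : nat -> R) (x : nat -> R) (pi : nat -> nat) : Prop :=
  forall i j, (i <= j)%nat -> (j < B)%nat ->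
    nrm (pi j) x / omega (pi j) <= nrm (pi i) x / omega (pi i).

(* sum_{i=1}^k omega_{pi(i)}^2 (0-based: i < k) *)
Definition prefix_w (omega : nat -> R) (pi : nat -> nat) (k : nat) : R :=
  sumR k (fun i => omega (pi i) ^ 2).

Fixpoint kmax (omega : nat -> R) (pi : nat -> nat) (t : R) (n : nat) : nat :=
  match n with
  | O => O
  | S m => if Rle_dec (prefix_w omega pi (S m)) t then S m else kmax omega pi t m
  end.

Definition k_t (B : nat) (omega : nat -> R) (pi : nat -> nat) (t : R) : nat :=
  kmax omega pi t B.

Definition S_t (B : nat) (omega : nat -> R) (pi : nat -> nat) (t : R) : nat -> bool :=
  fun b => existsb (fun i => Nat.eqb (pi i) b) (seq 0 (k_t B omega pi t)).

Definition sigma_tilde (B : nat) (blk : nat -> nat) (nrm : nat -> (nat -> R) -> R)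
  (omega : nat -> R) (p : R) (pi : nat -> nat) (t : R) (x : nat -> R) : R :=
  mixnorm B nrm omega p (vsub x (restrict blk (S_t B omega pi t) x)).

From Stdlib Require Import Reals Lra Lia Arith Bool List ClassicalEpsilon FinFun.
Open Scope R_scope.

(* Write F b = omega_b^(2-p) ||x[b]||^p = omega_b^2 r_b^p with the
   block ratios r_b = ||x[b]|| / omega_b, so that the p-th power of the mixed
   norm of x - x[S] is the tail sum of F over the blocks outside S.  Let S
   be the quasi-best set S_{3s} (the first k blocks in ratio order) and T
   the support of an arbitrary competitor z with omega(T) <= s.  Either S
   contains every block, or the next block no longer fits, which together
   with omega_b^2 <= ||omega||_inf^2 <= s forces omega(S) >= s >= omega(T).
   In the latter case the threshold m = r_{pi(k-1)}^p satisfies F >= m omega_b^2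
   on S and F <= m omega_b^2 off S, and an exchange argument over the symmetric
   difference of S and T shows that the F-tail outside S is at most the
   F-tail outside T, which is at most ||x - z||^p.  Taking the infimum over
   z gives the theorem. *)

Lemma sumR_ext n f g : (forall b, (b < n)%nat -> f b = g b) -> sumR n f = sumR n g.
Proof.
  induction n as [|n IH]; intros Hfg; simpl; auto.
  rewrite IH by (intros; apply Hfg; lia). rewrite Hfg by lia. reflexivity.
Qed.

Lemma sumR_le n f g : (forall b, (b < n)%nat -> f b <= g b) -> sumR n f <= sumR n g.
Proof.
  induction n as [|n IH]; intros Hfg; simpl; [lra|].
  assert (sumR n f <= sumR n g) by (apply IH; intros; apply Hfg; lia).
  assert (f n <= g n) by (apply Hfg; lia). lra.
Qed.

Lemma sumR_zero n : sumR n (fun _ => 0) = 0.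
Proof. induction n as [|n IH]; simpl; [|rewrite IH]; ring. Qed.

Lemma sumR_nonneg n f : (forall b, (b < n)%nat -> 0 <= f b) -> 0 <= sumR n f.
Proof. intros Hf. rewrite <- (sumR_zero n). apply sumR_le; exact Hf. Qed.

Lemma sumR_lin n f g h c :
  sumR n (fun b => f b + c * g b - c * h b) = sumR n f + c * sumR n g - c * sumR n h.
Proof. induction n as [|n IH]; simpl; [ring|]. rewrite IH; ring. Qed.

Lemma sumR_indicator n c g : (c < n)%nat ->
  sumR n (fun b => if Nat.eqb c b then g b else 0) = g c.
Proof.
  induction n as [|n IH]; intros Hc; [lia|]. simpl.
  destruct (Nat.eq_dec c n) as [->|Hne].
  - rewrite Nat.eqb_refl, (sumR_ext _ _ (fun _ => 0)), sumR_zero; [ring|].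
    intros b Hb. destruct (Nat.eqb_spec n b); [lia|reflexivity].
  - destruct (Nat.eqb_spec c n); [lia|]. rewrite IH by lia. ring.
Qed.

Lemma maxR_ge n f b : (b < n)%nat -> f b <= maxR n f.
Proof.
  induction n as [|n IH]; intros Hb; [lia|]. simpl.
  destruct (Nat.eq_dec b n) as [->|Hne]; [apply Rmax_r|].
  eapply Rle_trans; [apply IH; lia|apply Rmax_l].
Qed.

Lemma rpow_nonneg u y : 0 <= rpow u y.
Proof.
  unfold rpow. destruct (Rle_dec u 0); [lra|]. left; apply exp_pos.
Qed.

Lemma rpow_zero y : rpow 0 y = 0.
Proof. unfold rpow. destruct (Rle_dec 0 0); lra. Qed.

Lemma rpow_mono u v y : 0 <= y -> 0 <= u <= v -> rpow u y <= rpow v y.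
Proof.
  intros Hy Huv. unfold rpow.
  destruct (Rle_dec u 0), (Rle_dec v 0); try lra.
  - left; apply exp_pos.
  - apply Rle_Rpower_l; lra.
Qed.

Lemma rpow_weight_split w n p : 1 <= w -> 0 <= n ->
  rpow w (2 - p) * rpow n p = w ^ 2 * rpow (n / w) p.
Proof.
  intros Hw Hn. unfold rpow.
  destruct (Rle_dec w 0); [lra|].
  destruct (Rle_dec n 0) as [Hn0|Hn0].
  - replace n with 0 by lra. unfold Rdiv. rewrite Rmult_0_l.
    destruct (Rle_dec 0 0); lra.
  - destruct (Rle_dec (n / w) 0) as [Hq|Hq].
    + assert (0 < n / w) by (apply Rdiv_lt_0_compat; lra). lra.
    + replace n with (w * (n / w)) at 1 by (field; lra).
      rewrite <- Rpower_mult_distr, <- Rmult_assoc, <- Rpower_plus by lra.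
      replace (2 - p + p) with (INR 2) by (simpl; ring).
      rewrite Rpower_pow by lra. ring.
Qed.

Lemma tail_sum_exchange n (w F : nat -> R) (S T : nat -> bool) (m : R) :
  0 <= m ->
  (forall b, (b < n)%nat -> S b = true -> m * w b <= F b) ->
  (forall b, (b < n)%nat -> S b = false -> F b <= m * w b) ->
  sumR n (fun b => if T b then w b else 0) <= sumR n (fun b => if S b then w b else 0) ->
  sumR n (fun b => if S b then 0 else F b) <= sumR n (fun b => if T b then 0 else F b).
Proof.
  intros Hm HinS HoutS Hheavy.
  assert (Hpointwise : sumR n (fun b => if S b then 0 else F b) <=
    sumR n (fun b => (if T b then 0 else F b) + m * (if T b then w b else 0)
                      - m * (if S b then w b else 0))).
  { apply sumR_le. intros b Hb.
    destruct (S b) eqn:ES, (T b) eqn:ET; try lra.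
    - specialize (HinS b Hb ES). lra.
    - specialize (HoutS b Hb ES). lra. }
  rewrite sumR_lin in Hpointwise.
  assert (0 <= m * (sumR n (fun b => if S b then w b else 0)
                    - sumR n (fun b => if T b then w b else 0))) by (apply Rmult_le_pos; lra).
  lra.
Qed.

Definition first_blocks (pi : nat -> nat) (k : nat) (b : nat) : bool :=
  existsb (fun i => Nat.eqb (pi i) b) (seq 0 k).

Lemma first_blocks_spec pi k b :
  first_blocks pi k b = true <-> exists i, (i < k)%nat /\ pi i = b.
Proof.
  unfold first_blocks. rewrite existsb_exists. split.
  - intros [i [Hi He]]. apply in_seq in Hi. apply Nat.eqb_eq in He. exists i; split; [lia|auto].
  - intros [i [Hi He]]. exists i. split; [apply in_seq; lia|apply Nat.eqb_eq; auto].
Qed.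

Lemma perm_surjective B pi : is_perm B pi ->
  forall b, (b < B)%nat -> exists j, (j < B)%nat /\ pi j = b.
Proof.
  intros [Hrange Hinj]. apply bInjective_bSurjective; [exact Hrange|exact Hinj].
Qed.

Lemma omega_set_first_blocks B omega pi k : is_perm B pi -> (k <= B)%nat ->
  omega_set B omega (first_blocks pi k) = prefix_w omega pi k.
Proof.
  intros [Hrange Hinj] Hk. unfold omega_set, prefix_w.
  induction k as [|k IH]; cbn [sumR]; [apply sumR_zero|].
  rewrite <- IH by lia.
  transitivity (sumR B (fun b => (if first_blocks pi k b then omega b ^ 2 else 0)
     + 1 * (if Nat.eqb (pi k) b then omega b ^ 2 else 0) - 1 * 0)).
  - apply sumR_ext. intros b Hb. unfold first_blocks at 1.
    rewrite seq_S, existsb_app. fold (first_blocks pi k b). simpl. rewrite orb_false_r.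
    destruct (first_blocks pi k b) eqn:Ek, (Nat.eqb_spec (pi k) b); simpl; try ring.
    apply first_blocks_spec in Ek. destruct Ek as [i [Hi Hpi]].
    assert (i = k) by (apply Hinj; lia). lia.
  - rewrite sumR_lin, sumR_zero, sumR_indicator by (apply Hrange; lia). ring.
Qed.

Lemma kmax_spec omega pi t n : (kmax omega pi t n <= n)%nat /\
  ((kmax omega pi t n < n)%nat -> t < prefix_w omega pi (S (kmax omega pi t n))).
Proof.
  induction n as [|n [Hle Hlt]]; simpl; [split; lia|].
  destruct (Rle_dec (prefix_w omega pi (S n)) t) as [Hfit|Hfit]; [split; lia|].
  split; [lia|]. intros _.
  destruct (Nat.eq_dec (kmax omega pi t n) n) as [->|Hne]; [lra|apply Hlt; lia].
Qed.

Lemma sorted_prefix_threshold B pi (r : nat -> R) k :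
  is_perm B pi ->
  (forall i j, (i <= j)%nat -> (j < B)%nat -> r (pi j) <= r (pi i)) ->
  (k < B)%nat ->
  (forall b, first_blocks pi k b = true -> r (pi (k - 1)%nat) <= r b) /\
  (forall b, (b < B)%nat -> first_blocks pi k b = false -> r b <= r (pi (k - 1)%nat)).
Proof.
  intros Hperm Hsorted Hk. split.
  - intros b Hb. apply first_blocks_spec in Hb. destruct Hb as [i [Hi <-]].
    apply Hsorted; lia.
  - intros b Hb Hout. destruct (perm_surjective B pi Hperm b Hb) as [j [Hj <-]].
    destruct (Nat.lt_ge_cases j k) as [Hjk|Hjk].
    + assert (first_blocks pi k (pi j) = true) by (apply first_blocks_spec; eauto).
      congruence.
    + apply Hsorted; lia.
Qed.

Section QuasiBestTail.

Variables (B : nat) (omega : nat -> R) (pi : nat -> nat) (r F : nat -> R) (p s : R).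

Hypothesis omega_ge1 : forall b, (b < B)%nat -> 1 <= omega b.
Hypothesis pi_perm : is_perm B pi.
Hypothesis r_sorted : forall i j, (i <= j)%nat -> (j < B)%nat -> r (pi j) <= r (pi i).
Hypothesis r_nonneg : forall b, (b < B)%nat -> 0 <= r b.
Hypothesis F_split : forall b, (b < B)%nat -> F b = omega b ^ 2 * rpow (r b) p.
Hypothesis p_pos : 0 < p.
Hypothesis s_large : omega_inf B omega ^ 2 <= s.

Lemma quasi_best_heavy : (k_t B omega pi (3 * s) < B)%nat ->
  s <= omega_set B omega (S_t B omega pi (3 * s)).
Proof.
  set (k := k_t B omega pi (3 * s)). intros Hk.
  assert (Hover : 3 * s < prefix_w omega pi (S k)) by (apply kmax_spec, Hk).
  assert (Hlast : omega (pi k) ^ 2 <= s).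
  { assert (Hpk : (pi k < B)%nat) by (apply pi_perm; exact Hk).
    assert (1 <= omega (pi k)) by auto.
    assert (omega (pi k) <= omega_inf B omega) by (apply maxR_ge; exact Hpk).
    eapply Rle_trans; [|exact s_large]. apply pow_incr. lra. }
  assert (0 <= s) by (eapply Rle_trans; [apply pow2_ge_0|exact s_large]).
  change (S_t B omega pi (3 * s)) with (first_blocks pi k).
  rewrite omega_set_first_blocks by (auto; lia).
  change (prefix_w omega pi (S k)) with (prefix_w omega pi k + omega (pi k) ^ 2) in Hover.
  lra.
Qed.

Lemma quasi_best_tail_le (T : nat -> bool) :
  omega_set B omega T <= s ->
  sumR B (fun b => if S_t B omega pi (3 * s) b then 0 else F b)
    <= sumR B (fun b => if T b then 0 else F b).
Proof.
  intros HT.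
  set (k := k_t B omega pi (3 * s)).
  assert (Hk : (k <= B)%nat) by apply kmax_spec.
  destruct (Nat.eq_dec k B) as [Hall|Hpart].
  - rewrite (sumR_ext _ _ (fun _ => 0)), sumR_zero.
    + apply sumR_nonneg. intros b Hb. destruct (T b); [lra|].
      rewrite F_split by exact Hb. apply Rmult_le_pos; [apply pow2_ge_0|apply rpow_nonneg].
    + intros b Hb. destruct (perm_surjective B pi pi_perm b Hb) as [j [Hj Hjb]].
      replace (S_t B omega pi (3 * s) b) with true; [reflexivity|].
      symmetry. apply first_blocks_spec. exists j. fold k. split; [lia|exact Hjb].
  - destruct (sorted_prefix_threshold B pi r k pi_perm r_sorted ltac:(lia))
      as [HinS HoutS].
    assert (Hpk : (pi (k - 1) < B)%nat) by (apply pi_perm; lia).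
    apply (tail_sum_exchange B (fun b => omega b ^ 2) F _ T (rpow (r (pi (k - 1)%nat)) p)).
    + apply rpow_nonneg.
    + intros b Hb Hin. rewrite F_split, (Rmult_comm (rpow _ _)) by exact Hb.
      apply Rmult_le_compat_l; [apply pow2_ge_0|].
      apply rpow_mono; [lra|]. split; [auto|]. apply HinS, Hin.
    + intros b Hb Hout. rewrite F_split, (Rmult_comm (rpow _ _)) by exact Hb.
      apply Rmult_le_compat_l; [apply pow2_ge_0|].
      apply rpow_mono; [lra|]. split; [auto|]. apply HoutS; [exact Hb|exact Hout].
    + apply Rle_trans with s; [exact HT|]. apply quasi_best_heavy. lia.
Qed.

End QuasiBestTail.

Definition block_term (nrm : nat -> (nat -> R) -> R) (omega : nat -> R) (p : R)
  (v : nat -> R) (b : nat) : R :=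
  rpow (omega b) (2 - p) * rpow (nrm b v) p.

(* The mixed norm is monotone in the sum of its block terms, as 1/p > 0. *)
Lemma mixnorm_le B nrm omega p u v : 0 < p ->
  sumR B (block_term nrm omega p u) <= sumR B (block_term nrm omega p v) ->
  mixnorm B nrm omega p u <= mixnorm B nrm omega p v.
Proof.
  intros Hp Huv. apply rpow_mono; [|split; [|exact Huv]].
  - unfold Rdiv. rewrite Rmult_1_l. left; apply Rinv_0_lt_compat, Hp.
  - apply sumR_nonneg. intros b _. apply Rmult_le_pos; apply rpow_nonneg.
Qed.

Lemma block_term_split N B blk nrm omega p x b :
  is_block_norm N B blk nrm -> (b < B)%nat -> 1 <= omega b ->
  block_term nrm omega p x b = omega b ^ 2 * rpow (nrm b x / omega b) p.
Proof.
  intros Hnrm Hb Hw. apply rpow_weight_split; [exact Hw|apply (Hnrm b Hb)].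
Qed.

Lemma block_term_restrict N B blk nrm omega p S x b :
  is_block_norm N B blk nrm -> (b < B)%nat ->
  block_term nrm omega p (vsub x (restrict blk S x)) b
    = if S b then 0 else block_term nrm omega p x b.
Proof.
  intros Hnrm Hb. destruct (Hnrm b Hb) as [Hlocal [_ [Hdefinite _]]].
  unfold block_term, vsub, restrict. destruct (S b) eqn:ESb.
  - replace (nrm b _) with 0; [rewrite rpow_zero; ring|].
    symmetry. apply Hdefinite. intros i Hi Hbi. rewrite Hbi, ESb. ring.
  - do 2 f_equal. apply Hlocal. intros i Hi Hbi. rewrite Hbi, ESb. ring.
Qed.

Lemma block_nz_false N blk z b : block_nz N blk z b = false ->
  forall i, (i < N)%nat -> blk i = b -> z i = 0.
Proof.
  intros Hzero i Hi Hbi. destruct (Req_EM_T (z i) 0) as [Hz|Hz]; [exact Hz|].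
  assert (block_nz N blk z b = true); [|congruence].
  apply existsb_exists. exists i. split; [apply in_seq; lia|].
  rewrite Hbi, Nat.eqb_refl. destruct (Req_EM_T (z i) 0); [contradiction|reflexivity].
Qed.

Lemma block_terms_off_support N B blk nrm omega p x z :
  is_block_norm N B blk nrm ->
  sumR B (fun b => if block_nz N blk z b then 0 else block_term nrm omega p x b)
    <= sumR B (block_term nrm omega p (vsub x z)).
Proof.
  intros Hnrm. apply sumR_le. intros b Hb.
  destruct (block_nz N blk z b) eqn:ET.
  - apply Rmult_le_pos; apply rpow_nonneg.
  - right. unfold block_term. do 2 f_equal. apply (Hnrm b Hb).
    intros i Hi Hbi. unfold vsub. rewrite (block_nz_false N blk z b ET i Hi Hbi). ring.
Qed.

Lemma block_nz_zero N blk b : block_nz N blk (fun _ => 0) b = false.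
Proof.
  apply not_true_is_false. intros Hnz. apply existsb_exists in Hnz.
  destruct Hnz as [i [_ Hi]]. destruct (Req_EM_T 0 0); [|lra].
  rewrite andb_false_r in Hi. discriminate.
Qed.

(* sigma_best is the infimum of the errors; the set is nonempty (z = 0)
   and bounded below by 0, so the infimum exists by completeness. *)
Lemma sigma_best_inf N B blk nrm omega p s x : 0 <= s ->
  is_inf (fun y => exists z : nat -> R, wl0 N B blk omega z <= s /\
      y = mixnorm B nrm omega p (vsub x z)) (sigma_best N B blk nrm omega p s x).
Proof.
  intros Hs. unfold sigma_best. apply epsilon_spec.
  set (E := fun y => exists z : nat -> R, wl0 N B blk omega z <= s /\
      y = mixnorm B nrm omega p (vsub x z)).
  destruct (completeness (fun y => E (- y))) as [l [Hub Hlub]].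
  - exists 0. intros y [z [_ Hy]].
    assert (0 <= - y) by (rewrite Hy; apply rpow_nonneg). lra.
  - exists (- mixnorm B nrm omega p (vsub x (fun _ => 0))). exists (fun _ => 0).
    split; [|lra].
    unfold wl0, omega_set. rewrite (sumR_ext _ _ (fun _ => 0)), sumR_zero; [exact Hs|].
    intros b _. rewrite block_nz_zero. reflexivity.
  - exists (- l). split.
    + intros y Hy. assert (- y <= l) by (apply Hub; unfold E; rewrite Ropp_involutive; exact Hy).
      lra.
    + intros m Hm. assert (l <= - m); [|lra].
      apply Hlub. intros y Hy. assert (m <= - y) by (apply Hm, Hy). lra.
Qed.

Theorem mainTheorem2
  (N B : nat) (blk : nat -> nat) (omega : nat -> R)
  (nrm : nat -> (nat -> R) -> R) (p : R) (x : nat -> R) (pi : nat -> nat) (s : R) :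
  is_block_partition N B blk ->
  (forall b, (b < B)%nat -> 1 <= omega b) ->
  is_block_norm N B blk nrm ->
  0 < p -> p <= 2 ->
  is_perm B pi ->
  ratio_sorted B nrm omega x pi ->
  omega_inf B omega ^ 2 <= s ->
  sigma_tilde B blk nrm omega p pi (3 * s) x <= sigma_best N B blk nrm omega p s x.
Proof.
  intros _ Hom Hnrm Hp _ Hperm Hsorted Hs.
  assert (Hs0 : 0 <= s) by (eapply Rle_trans; [apply pow2_ge_0|exact Hs]).
  apply (sigma_best_inf N B blk nrm omega p s x Hs0). intros y [z [Hz ->]].
  apply mixnorm_le; [exact Hp|].
  rewrite (sumR_ext _ _ _ (fun b => block_term_restrict N B blk nrm omega p _ x b Hnrm)).
  eapply Rle_trans; [|apply (block_terms_off_support N B blk nrm omega p x z Hnrm)].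
  apply (quasi_best_tail_le B omega pi (fun b => nrm b x / omega b)
           (block_term nrm omega p x) p s); auto.
  - intros b Hb. apply Rmult_le_pos; [apply (Hnrm b Hb)|].
    assert (1 <= omega b) by auto. left; apply Rinv_0_lt_compat; lra.
  - intros b Hb. apply (block_term_split N B blk); auto.
Qed.
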